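(* Let $X^{(n)}=\{X_1,\dots,X_n\}\subset\mathbb{R}^d$ and $u^{(n)}=\{u_1,\dots,u_n\}\subset\mathbb{R}^d$, and fix $i\in\{1,\dots,n\}$. Then for every $\ell\in\mathbb{N}$ with $\mathrm{TD}^-(u_i;u^{(n)})>\ell/n$, there exists $R>0$ such that $\hat T_{Z^{(n)}}(u_i)\in R\,\mathbb{B}$ for all $Z^{(n)}\in\mathcal{Q}_{\ell,n}$.
   Context: $\mathbb{B}=\{x:\|x\|\leq1\}$. For a set $Z^{(n)}$ of $n$ points, $\hat T_{Z^{(n)}}$ denotes any bijection $T:u^{(n)}\to Z^{(n)}$ minimizing $\frac1n\sum_j\|T(u_j)-u_j\|^2$. $\mathcal{Q}_{\ell,n}$ is the set of all sets $Z^{(n)}$ of $n$ points of $\mathbb{R}^d$ sharing exactly $n-\ell$ elements with $X^{(n)}$. Lower Tukey depth: $\mathrm{TD}^-(u;u^{(n)})=\frac{n+1}{n}-\max_{v\in\mathcal{S}^{d-1}}\frac1n\sum_j\mathbf{1}(\langle v,u_j-u\rangle\geq0)$. *)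

From HB Require Import structures.
From mathcomp Require Import all_boot all_order all_algebra all_fingroup.
From mathcomp Require Import all_classical all_reals.
Set Implicit Arguments. Unset Strict Implicit. Unset Printing Implicit Defensive.
Import Order.TTheory GRing.Theory Num.Theory.
Local Open Scope ring_scope.
Local Open Scope classical_set_scope.

Definition dotp (R : realType) (d : nat) (x y : 'rV[R]_d) : R :=
  \sum_(k < d) x 0 k * y 0 k.

Definition sqnorm (R : realType) (d : nat) (x : 'rV[R]_d) : R := dotp x x.

Definition sphere (R : realType) (d : nat) : set 'rV[R]_d :=
  [set v | sqnorm v = 1].

Definition in_ball (R : realType) (d : nat) (r : R) (x : 'rV[R]_d) : Prop :=
  Num.sqrt (sqnorm x) <= r.

(* lower Tukey depth TD^-(u; u^(n)) = (n+1)/n - max_{v in S^{d-1}}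
   (1/n) sum_j 1(<v, u_j - u> >= 0); the max is written as a sup
   (the set of values is finite, so the sup is attained). *)
Definition lower_tukey_depth (R : realType) (d n : nat)
    (x : 'rV[R]_d) (u : 'I_n -> 'rV[R]_d) : R :=
  (n.+1)%:R / n%:R -
  sup [set (n%:R)^-1 * (#|[set j : 'I_n | 0 <= dotp v (u j - x)]|)%:R
       | v in @sphere R d].

Definition transport_cost (R : realType) (d n : nat)
    (u Z : 'I_n -> 'rV[R]_d) (s : 'S_n) : R :=
  (n%:R)^-1 * \sum_(j < n) sqnorm (Z (s j) - u j).

(* s encodes an optimal bijection \hat T_Z : u_j |-> Z_(s j) *)
Definition optimal_transport (R : realType) (d n : nat)
    (u Z : 'I_n -> 'rV[R]_d) (s : 'S_n) : Prop :=
  forall t : 'S_n, transport_cost u Z s <= transport_cost u Z t.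

(* Z^(n) in Q_{l,n}: a set of n (distinct) points sharing exactly n - l
   elements with X^(n) *)
Definition in_Q (R : realType) (d n l : nat)
    (X Z : 'I_n -> 'rV[R]_d) : Prop :=
  injective Z /\ #|[set j : 'I_n | Z j \in codom X]| = (n - l)%N.

(* The depth hypothesis says that every direction v has at most n - l indices
   j with <v, u_j - u_i> <= 0; by compactness of the sphere this persists with
   0 replaced by a uniform margin e > 0.  Optimality of the transport gives,
   by exchanging the targets of i and j, the monotonicity
   <Z(s i), u_j - u_i> <= <Z(s j), u_j - u_i>.  Suppose Z(s i) is a new point
   with large norm.  For the n - l indices j sent to old points X_m the right
   side is at most a constant C depending only on X and u, so in the direction
   v of Z(s i) these indices and i itself give n - l + 1 indices with
   <v, u_j - u_i> <= C / |Z(s i)| <= e, a contradiction. *)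

From HB Require Import structures.
From mathcomp Require Import all_boot all_order all_algebra all_fingroup.
From mathcomp Require Import all_classical all_reals all_analysis.
From mathcomp Require Import ring lra.
Import Order.TTheory GRing.Theory Num.Theory.
Import numFieldNormedType.Exports.
Local Open Scope ring_scope.
Local Open Scope classical_set_scope.

Section InnerProduct.
Context {R : realType} {d : nat}.
Implicit Types (x y z a b v : 'rV[R]_d) (c : R).

Lemma dotpZl c x y : dotp (c *: x) y = c * dotp x y.
Proof. by rewrite /dotp mulr_sumr; apply: eq_bigr => k _; rewrite !mxE mulrA. Qed.

Lemma dotpNl x y : dotp (- x) y = - dotp x y.
Proof. by rewrite /dotp -sumrN; apply: eq_bigr => k _; rewrite !mxE mulNr. Qed.

Lemma dotpr0 x : dotp x 0 = 0.
Proof. by rewrite /dotp big1 // => k _; rewrite mxE mulr0. Qed.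

Lemma sqnorm_ge0 x : 0 <= sqnorm x.
Proof. by apply: sumr_ge0 => k _; rewrite -expr2 sqr_ge0. Qed.

Lemma sqnormZ c x : sqnorm (c *: x) = c ^+ 2 * sqnorm x.
Proof. by rewrite /sqnorm /dotp mulr_sumr; apply: eq_bigr => k _; rewrite !mxE; ring. Qed.

Lemma sqnorm_exchange z y a b :
  sqnorm (z - a) + sqnorm (y - b) - (sqnorm (y - a) + sqnorm (z - b)) =
  2 * (dotp z (b - a) - dotp y (b - a)).
Proof.
rewrite /sqnorm /dotp -!big_split -sumrB -sumrB mulr_sumr /=.
by apply: eq_bigr => k _; rewrite !mxE; ring.
Qed.

Lemma sphereN v : sphere v -> sphere (- v).
Proof. by rewrite /sphere /= -scaleN1r sqnormZ sqrrN expr1n mul1r. Qed.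

Lemma sphere_normalize z :
  0 < sqnorm z -> sphere ((Num.sqrt (sqnorm z))^-1 *: z).
Proof.
move=> z0; rewrite /sphere /= sqnormZ exprVn sqr_sqrtr ?sqnorm_ge0 //.
by rewrite mulVf ?gt_eqF.
Qed.

Lemma sphere_coord_le1 v k : sphere v -> `|v 0 k| <= 1.
Proof.
move=> sv; have : v 0 k * v 0 k <= 1.
  rewrite -sv /sqnorm /dotp (bigD1 k) //= lerDl.
  by apply: sumr_ge0 => j _; rewrite -expr2 sqr_ge0.
by rewrite ler_norml => ?; apply/andP; split; nra.
Qed.

Lemma continuous_dotpl y : continuous (fun x => dotp x y).
Proof.
apply: continuous_big => [|k _ x]; first exact: add_continuous.
by apply: continuousM; [exact: coord_continuous | exact: cst_continuous].
Qed.

Lemma continuous_sqnorm : continuous (@sqnorm R d).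
Proof.
apply: continuous_big => [|k _ x]; first exact: add_continuous.
by apply: continuousM; exact: coord_continuous.
Qed.

Lemma compact_sphere : compact (@sphere R d).
Proof.
apply: bounded_closed_compact.
  exists 1; split; first by rewrite realE ler01.
  move=> M M1 v sv; rewrite /Num.norm /= mx_normrE.
  apply/bigmax_leP; split=> [|[a k] _ /=]; first lra.
  by rewrite (ord1 a); apply: le_trans (sphere_coord_le1 _ k sv) _; exact: ltW.
apply: (@preimage_closed _ _ (@sqnorm R d) [set 1]); last exact: closed_eq.
by move=> x _; exact: continuous_sqnorm.
Qed.

End InnerProduct.

Section UniformMargin.
Context {R : realType} {T : ptopologicalType} {I : finType} {f : I -> T -> R}.
Hypothesis f_cont : forall j, continuous (f j).

Lemma open_card_le (c : R) (N : nat) :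
  open [set x | (#|[set j | (f j x <= c)%R]| <= N)%N].
Proof.
rewrite openE => x Nx.
have : \forall y \near x, forall j, c < f j x -> c < f j y.
  apply: filter_forall => j; have [cf|_] := ltP c (f j x); last exact: filterE.
  have cnb : nbhs (f j x) [set r | c < r].
    by apply: open_nbhs_nbhs; split; [exact: open_gt|].
  have fjc : \forall y \near x, c < f j y by exact: f_cont j x _ cnb.
  by apply: filterS fjc => y.
apply: filterS => y cfy; apply: leq_trans Nx; apply: subset_leq_card.
apply/fintype.subsetP => j; rewrite !inE; apply: contraLR; rewrite -!ltNge; exact: cfy.
Qed.

Lemma compact_uniform_margin {S : set T} {N : nat} : compact S ->
  (forall x, S x -> #|[set j | (f j x <= 0)%R]| <= N)%N ->
  exists2 e : R, 0 < e & forall x, S x -> (#|[set j | (f j x <= e)%R]| <= N)%N.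
Proof.
move=> cS fN.
pose U k := [set x | (#|[set j | (f j x <= k.+1%:R^-1)%R]| <= N)%N].
have cover : S `<=` \bigcup_(k in [set: nat]) U k.
  (* k.+1 exceeds 1 / f j x for every j with f j x > 0 *)
  move=> x Sx; pose k := (\sum_j Num.truncn (f j x)^-1)%N.
  exists k => //; apply: leq_trans (fN x Sx); apply: subset_leq_card.
  apply/fintype.subsetP => j; rewrite !inE; apply: contraLR; rewrite -!ltNge => fj0.
  rewrite -[f j x]invrK ltf_pV2 ?posrE ?invr_gt0 ?ltr0n //.
  apply: lt_le_trans (truncnS_gt _) _.
  by rewrite ler_nat ltnS /k (bigD1 j) //= leq_addr.
move: cS; rewrite compact_cover.
move=> /(_ nat [set: nat] U (fun k _ => open_card_le _ _) cover) [D _ DU].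
exists (\max_(k <- finmap.enum_fset D) k)%N.+1%:R^-1; first by rewrite invr_gt0 ltr0n.
move=> x /DU [k kD Uk]; apply: leq_trans Uk; apply: subset_leq_card.
apply/fintype.subsetP => j; rewrite !inE => /le_trans; apply.
rewrite lef_pV2 ?posrE ?ltr0n // ler_nat ltnS.
exact: (@leq_bigmax_seq _ _ xpredT id k).
Qed.

End UniformMargin.

Section TukeyDepth.
Context {R : realType} {d n l : nat} {u : 'I_n -> 'rV[R]_d} {x : 'rV[R]_d}.
Hypothesis n_gt0 : (0 < n)%N.

Lemma lower_tukey_depth_card :
  l%:R / n%:R < lower_tukey_depth x u -> forall v, sphere v ->
  (#|[set j | (0 <= dotp v (u j - x))%R]| + l <= n)%N.
Proof.
rewrite /lower_tukey_depth; set E := (X in sup X) => depth v sv.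
set c := #|_|.
have Ec : E (n%:R^-1 * c%:R) by exists v.
have ubE : has_ubound E.
  exists 1 => _ [w _ <-]; rewrite ler_pdivrMl ?ltr0n // mulr1 ler_nat.
  by apply: leq_trans (max_card _) _; rewrite card_ord.
have := ub_le_sup ubE Ec; rewrite -ltnS -(ltr_nat R) -(ltr_pM2r (x := n%:R^-1)).
- by rewrite natrD mulrDl [c%:R * _]mulrC; lra.
- by rewrite invr_gt0 ltr0n.
Qed.

Lemma lower_tukey_depth_card_le0 :
  l%:R / n%:R < lower_tukey_depth x u -> forall v, sphere v ->
  (#|[set j | (dotp v (u j - x) <= 0)%R]| <= n - l)%N.
Proof.
move=> depth v /sphereN /(lower_tukey_depth_card depth) cardN.
rewrite leq_subRL; last by apply: leq_trans cardN; exact: leq_addl.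
rewrite addnC; apply: leq_trans cardN; rewrite leq_add2r.
by apply: subset_leq_card; apply/fintype.subsetP => j; rewrite !inE /= dotpNl oppr_ge0; exact.
Qed.

End TukeyDepth.

Section OptimalTransport.
Context {R : realType} {d n : nat} {u Z : 'I_n -> 'rV[R]_d} {s : 'S_n}.
Hypothesis s_opt : optimal_transport u Z s.

Lemma optimal_transport_exchange i j :
  sqnorm (Z (s i) - u i) + sqnorm (Z (s j) - u j) <=
  sqnorm (Z (s j) - u i) + sqnorm (Z (s i) - u j).
Proof.
have [<-|ji] := eqVneq j i; first by rewrite addrC.
have n_gt0 : (0 < n)%N by apply: leq_ltn_trans (ltn_ord i).
have := s_opt (tperm i j * s)%g; rewrite /transport_cost ler_pM2l ?invr_gt0 ?ltr0n //.
rewrite [X in X <= _](bigD1 i) // [X in _ <= X](bigD1 i) //=.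
rewrite [X in _ + X <= _](bigD1 j) // [X in _ <= _ + X](bigD1 j) //=.
rewrite !permM tpermL tpermR.
under [X in _ <= _ + (_ + X)]eq_bigr => k /andP[ki kj].
  by rewrite permM tpermD 1?eq_sym //; over.
lra.
Qed.

Lemma optimal_transport_dotp_monotone i j :
  dotp (Z (s i)) (u j - u i) <= dotp (Z (s j)) (u j - u i).
Proof.
have := sqnorm_exchange (Z (s i)) (Z (s j)) (u i) (u j).
have := optimal_transport_exchange i j; lra.
Qed.

End OptimalTransport.

Section TransportedOutlier.
Context {R : realType} {d n l : nat} {X u Z : 'I_n -> 'rV[R]_d} {s : 'S_n}.
Hypotheses (QZ : in_Q l X Z) (s_opt : optimal_transport u Z s).

Lemma in_Q_card_transported : #|[set j | Z (s j) \in codom X]| = (n - l)%N.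
Proof.
case: QZ => _ <-; rewrite !mem_setE -[LHS]/#|[preim s of [pred j | Z j \in codom X]]|.
rewrite card_preim; last exact: perm_inj.
by apply: eq_card => j; rewrite !inE -[j in j \in codom s](permKV s) codom_f.
Qed.

Lemma optimal_transport_outlier_card (i : 'I_n) (C : R) :
  (forall m j, dotp (X m) (u j - u i) <= C) -> Z (s i) \notin codom X ->
  ((n - l).+1 <= #|[set j | (dotp (Z (s i)) (u j - u i) <= C)%R]|)%N.
Proof.
move=> XC zout.
have -> : (n - l).+1 = #|[predU1 i & [set j | Z (s j) \in codom X]]|.
  by rewrite cardU1 in_Q_card_transported unfold_in /= asboolb zout.
apply: subset_leq_card; apply/fintype.subsetP => j; rewrite !inE /=.
case/orP => [/eqP -> | /set_mem /codomP [m Zsj]].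
  by have := XC i i; rewrite subrr !dotpr0.
apply: le_trans (optimal_transport_dotp_monotone s_opt i j) _.
by rewrite Zsj.
Qed.

End TransportedOutlier.

Theorem mainTheorem10 (R : realType) (d n : nat)
    (X u : 'I_n -> 'rV[R]_d) (i : 'I_n)
    (hX : injective X) (hu : injective u) (l : nat) :
  lower_tukey_depth (u i) u > l%:R / n%:R ->
  exists r : R, 0 < r /\
    forall (Z : 'I_n -> 'rV[R]_d) (s : 'S_n),
      in_Q l X Z -> optimal_transport u Z s -> in_ball r (Z (s i)).
Proof.
move=> depth; have n_gt0 : (0 < n)%N by apply: leq_ltn_trans (ltn_ord i).
have [e e_gt0 margin] := compact_uniform_margin (f := fun j v => dotp v (u j - u i))
  (fun j => continuous_dotpl _) compact_sphere (lower_tukey_depth_card_le0 n_gt0 depth).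
pose B := \big[Num.max/0]_m Num.sqrt (sqnorm (X m)).
pose C := \big[Num.max/0]_(mj : 'I_n * 'I_n) dotp (X mj.1) (u mj.2 - u i).
exists (Num.max 1 (Num.max B (C / e))); split=> [|Z s QZ s_opt].
  by rewrite lt_max ltr01.
rewrite /in_ball; have [/codomP [m ->]|zout] := boolP (Z (s i) \in codom X).
  by rewrite !le_max (le_bigmax _ _ m) orbT.
rewrite leNgt !gt_max; apply/negP => /and3P[nu_gt1 _ farC].
set nu := Num.sqrt _ in nu_gt1 farC.
have nu_gt0 : 0 < nu := lt_trans ltr01 nu_gt1.
have z_gt0 : 0 < sqnorm (Z (s i)) by rewrite -sqrtr_gt0.
have := margin _ (sphere_normalize _ z_gt0); rewrite leqNgt => /negP; apply.
apply: leq_trans (optimal_transport_outlier_card QZ s_opt _ C _ zout) _.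
  by move=> m j; exact: (le_bigmax _ _ (m, j)).
apply: subset_leq_card; apply/fintype.subsetP => j; rewrite !inE /= dotpZl => zC.
rewrite mulrC ler_pdivrMr //; apply: le_trans zC _.
by move: farC; rewrite ltr_pdivrMr // mulrC => /ltW.
Qed.
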